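(* Let $S$ be the set of $\mathcal{G}$-invariant elements of $L_2(\mathcal{X},\mathcal{Y},\mu)$. For every $f\in L_2(\mathcal{X},\mathcal{Y},\mu)$, the function $\bar f=\mathcal{O}f$ is the unique solution of the least squares problem $\bar f=\operatorname{argmin}_{s\in S}\|f-s\|_\mu^2$.
   Context: $\mathcal{G}$ is a compact, second countable, Hausdorff topological group with Haar probability measure $\lambda$. $\mathcal{X}$ is a nonempty Polish space on which $\mathcal{G}$ acts measurably, $(g,x)\mapsto gx$. $\mathcal{Y}=\mathbb{R}^k$ with an inner product $\langle\cdot,\cdot\rangle$ and norm $\|\cdot\|$. $\mu$ is a $\mathcal{G}$-invariant Borel probability measure on $\mathcal{X}$. $L_2(\mathcal{X},\mathcal{Y},\mu)$ is the Hilbert space of $\mu$-a.e. classes of measurable $f:\mathcal{X}\to\mathcal{Y}$ with $\|f\|_\mu^2=\int\|f(x)\|^2d\mu(x)<\infty$, inner product $\langle f,h\rangle_\mu=\int\langle f(x),h(x)\rangle d\mu(x)$. A function $f$ is $\mathcal{G}$-invariant if $f(gx)=f(x)$ for all $g,x$. The orbit averaging operator is $\mathcal{O}f(x)=\int_\mathcal{G}f(gx)\,d\lambda(g)$. Uniqueness is as elements of $L_2(\mathcal{X},\mathcal{Y},\mu)$. *)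

From HB Require Import structures.
From mathcomp Require Import all_boot all_order all_algebra.
From mathcomp Require Import all_classical all_reals all_analysis.
Set Implicit Arguments. Unset Strict Implicit. Unset Printing Implicit Defensive.
Import Order.TTheory GRing.Theory Num.Theory.
Local Open Scope classical_set_scope.
Local Open Scope ring_scope.

Notation borel T := (g_sigma_algebraType (@open T)).

Definition is_group (G : Type) (mul : G -> G -> G) (inv : G -> G) (one : G) :=
  [/\ forall a b c, mul a (mul b c) = mul (mul a b) c,
      forall a, mul one a = a,
      forall a, mul a one = a,
      forall a, mul (inv a) a = one &
      forall a, mul a (inv a) = one].

Definition is_topological_group (G : topologicalType)
  (mul : G -> G -> G) (inv : G -> G) (one : G) :=
  [/\ is_group mul inv one,
      continuous (fun p : G * G => mul p.1 p.2) &
      continuous inv].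

Definition is_haar_probability (R : realType) (G : ptopologicalType)
  (mul : G -> G -> G) (lam : probability (borel G) R) :=
  forall (g : G) (A : set (borel G)), measurable A ->
    lam [set mul g h | h in A] = lam A.

Definition is_polish (R : realType) (X : topologicalType) :=
  exists d : X -> X -> R,
  [/\
      [/\ forall x y, 0 <= d x y, forall x y, d x y = 0 <-> x = y,
          forall x y, d x y = d y x &
          forall x y z, d x z <= d x y + d y z],
      (forall A : set X, open A <->
         (forall x, A x -> exists e : R, 0 < e /\ [set y | d x y < e] `<=` A)),
      (forall u : nat -> X,
         (forall e : R, 0 < e -> exists N, forall n m, (N <= n)%N -> (N <= m)%N ->
            d (u n) (u m) < e) ->
         exists l, forall e : R, 0 < e -> exists N, forall n, (N <= n)%N -> d (u n) l < e) &
      (exists2 D : set X, countable D & closure D = setT)].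

Definition is_action (G X : Type) (mul : G -> G -> G) (one : G) (act : G -> X -> X) :=
  (forall x, act one x = x) /\ (forall g h x, act (mul g h) x = act g (act h x)).

Definition is_inner_product (R : realType) (k : nat)
  (ip : 'rV[R]_k -> 'rV[R]_k -> R) :=
  [/\ forall u v, ip u v = ip v u,
      forall a u v w, ip (a *: u + v) w = a * ip u w + ip v w &
      forall u, u != 0 -> 0 < ip u u].

Section L2.
Context {d : measure_display} {T : measurableType d} {R : realType} {k : nat}.

(* measurable Y-valued function (Borel sigma-algebra of R^k = product) *)
Definition vmeasurable (f : T -> 'rV[R]_k) :=
  forall i : 'I_k, measurable_fun setT (fun x => f x ord0 i).

Definition L2norm2 (mu : {measure set T -> \bar R}) (ip : 'rV[R]_k -> 'rV[R]_k -> R)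
  (f : T -> 'rV[R]_k) : \bar R :=
  (\int[mu]_x (ip (f x) (f x))%:E)%E.

Definition inL2 (mu : {measure set T -> \bar R}) ip (f : T -> 'rV[R]_k) :=
  vmeasurable f /\ (L2norm2 mu ip f < +oo)%E.
End L2.

Definition invariant (G X Y : Type) (act : G -> X -> X) (f : X -> Y) :=
  forall g x, f (act g x) = f x.

(* s is an (invariant representative of an) element of S *)
Definition inS (R : realType) (k : nat) (G : Type) {d} (X : measurableType d)
  (act : G -> X -> X) (mu : {measure set X -> \bar R}) ip (s : X -> 'rV[R]_k) :=
  inL2 mu ip s /\ invariant act s.

(* the L2 class of h belongs to S *)
Definition class_inS (R : realType) (k : nat) (G : Type) {d} (X : measurableType d)
  (act : G -> X -> X) (mu : {measure set X -> \bar R}) ip (h : X -> 'rV[R]_k) :=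
  exists2 s, inS act mu ip s & {ae mu, forall x, h x = s x}.

Definition orbit_avg (R : realType) (k : nat) {dG} (G : measurableType dG) (X : Type)
  (lam : {measure set G -> \bar R}) (act : G -> X -> X) (f : X -> 'rV[R]_k) :
  X -> 'rV[R]_k :=
  fun x => \row_(i < k) Rintegral lam setT (fun g => f (act g x) ord0 i).

(* It is square integrable by Jensen's inequality on each
   orbit followed by Tonelli over [lam \x mu] and the invariance of [mu].  It is
   invariant because a Haar probability is also invariant under inversion,
   hence under right translations.  For an invariant square integrable [t],
   Fubini and the invariance of [mu] give [<f, t> = <fbar, t>]. *)

From Pilot Require Import Defs.
From HB Require Import structures.
From mathcomp Require Import all_boot all_order all_algebra.
From mathcomp Require Import all_classical all_reals all_analysis.
From mathcomp Require Import measurable_realfun.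
From mathcomp Require Import ring lra.
Import Order.TTheory GRing.Theory Num.Theory.
Local Open Scope classical_set_scope.
Local Open Scope ring_scope.
Set Implicit Arguments. Unset Strict Implicit.

Section group_law.
Variables (G : Type) (mul : G -> G -> G) (inv : G -> G) (one : G).
Hypothesis Hgrp : is_group mul inv one.

Lemma grp_mulKg a b : mul (inv a) (mul a b) = b.
Proof. by case: Hgrp => A l1 _ lv _; rewrite A lv l1. Qed.

Lemma grp_mulKVg a b : mul a (mul (inv a) b) = b.
Proof. by case: Hgrp => A l1 _ _ rv; rewrite A rv l1. Qed.

Lemma grp_invgK a : inv (inv a) = a.
Proof. by case: Hgrp => A l1 r1 lv _; rewrite -[LHS]r1 -(lv a) A lv l1. Qed.

Lemma grp_invMg a b : inv (mul a b) = mul (inv b) (inv a).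
Proof.
case: Hgrp => A l1 r1 lv rv.
have ab_inv : mul (mul a b) (mul (inv b) (inv a)) = one.
  by rewrite -A (A b) rv l1 rv.
by rewrite -[LHS]r1 -ab_inv A lv l1.
Qed.
End group_law.

Lemma continuous_borel_measurable (S T : ptopologicalType) (f : S -> T) :
  continuous f -> measurable_fun setT (f : borel S -> borel T).
Proof.
move=> cf; apply: (@measurability _ _ (borel S) (borel T) setT f (@open T)) => //.
move=> _ [B oB <-]; apply: sub_gen_smallest; rewrite setTI.
by apply: open_comp => // x _; exact: cf.
Qed.

Lemma continuous_mull (G : topologicalType) (mul : G -> G -> G) (c : G) :
  continuous (fun p : G * G => mul p.1 p.2) -> continuous (mul c).
Proof.
move=> cm x; apply: (continuous_comp (f := fun g => (c, g))) (cm _).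
exact: cvg_pair (cvg_cst c) cvg_id.
Qed.

Section inner_product.
Variables (R : realType) (k : nat) (ip : 'rV[R]_k -> 'rV[R]_k -> R).
Hypothesis Hip : is_inner_product ip.

Lemma ipC u v : ip u v = ip v u. Proof. by case: Hip. Qed.

Lemma ip0l w : ip 0 w = 0.
Proof.
by case: Hip => _ L _; have := L 1 0 0 w; rewrite scale1r addr0 mul1r; lra.
Qed.

Lemma ipDl u v w : ip (u + v) w = ip u w + ip v w.
Proof. by case: Hip => _ L _; have := L 1 u v w; rewrite scale1r mul1r. Qed.

Lemma ipZl a u w : ip (a *: u) w = a * ip u w.
Proof. by case: Hip => _ L _; rewrite -(addr0 (a *: u)) L ip0l addr0. Qed.

Lemma ipBl u v w : ip (u - v) w = ip u w - ip v w.
Proof. by rewrite ipDl -scaleN1r ipZl mulN1r. Qed.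

Lemma ipDr u v w : ip w (u + v) = ip w u + ip w v.
Proof. by rewrite ipC ipDl !(ipC w). Qed.

Lemma ipBr u v w : ip w (u - v) = ip w u - ip w v.
Proof. by rewrite ipC ipBl !(ipC w). Qed.

Lemma ip_ge0 u : 0 <= ip u u.
Proof.
by case: Hip => _ _ P; have [->|/P/ltW//] := eqVneq u 0; rewrite ip0l.
Qed.

Lemma ip_eq0 u : ip u u = 0 -> u = 0.
Proof.
by case: Hip => _ _ P; have [//|/P] := eqVneq u 0; move=> /[swap] ->; rewrite ltxx.
Qed.

Lemma ip_selfD u v : ip (u + v) (u + v) = ip u u + 2 * ip u v + ip v v.
Proof. by rewrite ipDl !ipDr (ipC v u); ring. Qed.

Lemma ip_selfB u v : ip (u - v) (u - v) = ip u u - 2 * ip u v + ip v v.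
Proof. by rewrite ipBl !ipBr (ipC v u); ring. Qed.

Lemma normr_ip_le u v : `|ip u v| <= ip u u + ip v v.
Proof.
have := ip_ge0 (u + v); have := ip_ge0 (u - v).
rewrite ip_selfB ip_selfD => h1 h2; have := ip_ge0 u; have := ip_ge0 v.
by rewrite ler_norml; move=> *; apply/andP; split; lra.
Qed.

Lemma ip_selfB_le u v : ip (u - v) (u - v) <= 2 * (ip u u + ip v v).
Proof. by have := ip_ge0 (u + v); rewrite ip_selfB ip_selfD; lra. Qed.

Lemma ip_row_expand u w :
  ip u w = \sum_(i < k) u ord0 i * ip (delta_mx ord0 i) w.
Proof.
rewrite {1}(row_sum_delta u).
rewrite (big_morph (ip^~ w) (fun a b => ipDl a b w) (ip0l w)).
by apply: eq_bigr => i _; rewrite ipZl.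
Qed.

(* The Gram matrix of the canonical basis is invertible, so every coordinate
   form is represented by a vector. *)
Lemma ip_coord_repr (i : 'I_k) : exists w, forall u, ip u w = u ord0 i.
Proof.
pose A : 'M[R]_k := \matrix_(j, l) ip (delta_mx ord0 j) (delta_mx ord0 l).
have mulA (v : 'rV_k) a : (v *m A) ord0 a = ip v (delta_mx ord0 a).
  by rewrite mxE ip_row_expand; apply: eq_bigr => b _; rewrite mxE.
have A_inj (v : 'rV_k) : v *m A = 0 -> v = 0.
  move=> vA0; apply: ip_eq0; rewrite ip_row_expand big1 // => a _.
  by rewrite ipC -mulA vA0 mxE mulr0.
have A_unit : A \in unitmx.
  rewrite -row_free_unit -kermx_eq0; apply/eqP/row_matrixP => r.
  by rewrite row0; apply: A_inj; rewrite -row_mul mulmx_ker row0.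
exists (delta_mx ord0 i *m invmx A) => u.
rewrite ip_row_expand (bigD1 i) //= big1 => [|j ji].
  by rewrite ipC -mulA mulmxKV // mxE !eqxx mulr1 addr0.
by rewrite ipC -mulA mulmxKV // mxE eqxx (negbTE ji) mulr0.
Qed.
End inner_product.

Section square_integrable.
Context d (T : measurableType d) (R : realType) (k : nat).
Variables (ip : 'rV[R]_k -> 'rV[R]_k -> R) (mu : {measure set T -> \bar R}).
Hypothesis Hip : is_inner_product ip.
Implicit Types u v : T -> 'rV[R]_k.

Lemma vmeasurableB u v : vmeasurable u -> vmeasurable v ->
  vmeasurable (fun x => u x - v x).
Proof.
move=> hu hv i; rewrite (_ : (fun x => _) = fun x => u x ord0 i - v x ord0 i).
  exact: measurable_funB.
by apply/funext => x; rewrite !mxE.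
Qed.

Lemma ip_measurable u v : vmeasurable u -> vmeasurable v ->
  measurable_fun setT (fun x => ip (u x) (v x)).
Proof.
move=> hu hv.
have ip_r_measurable w : measurable_fun setT (fun x => ip (v x) w).
  rewrite (_ : (fun x => _) = fun x =>
      \sum_(j < k) v x ord0 j * ip (delta_mx ord0 j) w).
    by apply: measurable_sum => j; apply: measurable_funM.
  by apply/funext => x; rewrite (ip_row_expand Hip).
rewrite (_ : (fun x => _) = fun x =>
    \sum_(i < k) u x ord0 i * ip (v x) (delta_mx ord0 i)).
  by apply: measurable_sum => i; apply: measurable_funM.
apply/funext => x; rewrite (ip_row_expand Hip); apply: eq_bigr => i _.
by rewrite (ipC Hip).
Qed.

Lemma ip_self_emeasurable u : vmeasurable u ->
  measurable_fun setT (fun x => (ip (u x) (u x))%:E).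
Proof. by move=> hu; apply/measurable_EFinP; exact: ip_measurable. Qed.

Lemma L2norm2_ge0 u : (0 <= L2norm2 mu ip u)%E.
Proof. by apply: integral_ge0 => x _; rewrite lee_fin (ip_ge0 Hip). Qed.

Lemma integrable_ip_self u : inL2 mu ip u ->
  mu.-integrable setT (fun x => (ip (u x) (u x))%:E).
Proof.
move=> [hu fin]; apply/integrableP; split; first exact: ip_self_emeasurable.
rewrite (eq_integral (fun x => (ip (u x) (u x))%:E)) //.
by move=> x _; rewrite /= ger0_norm // (ip_ge0 Hip).
Qed.

Lemma integrable_ip u v : inL2 mu ip u -> inL2 mu ip v ->
  mu.-integrable setT (fun x => (ip (u x) (v x))%:E).
Proof.
move=> hu hv; apply: (le_integrable measurableT _ _
  (integrableD measurableT (integrable_ip_self hu) (integrable_ip_self hv))).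
  by apply/measurable_EFinP; apply: ip_measurable; [case: hu|case: hv].
move=> x _ /=; rewrite !lee_fin [X in _ <= X]ger0_norm ?(normr_ip_le Hip) //.
by rewrite addr_ge0 // (ip_ge0 Hip).
Qed.

Lemma inL2B u v :
  inL2 mu ip u -> inL2 mu ip v -> inL2 mu ip (fun x => u x - v x).
Proof.
move=> hu hv; have muv := vmeasurableB hu.1 hv.1; split => //.
apply: (@le_lt_trans _ _ (\int[mu]_x
    (2%:E * ((ip (u x) (u x))%:E + (ip (v x) (v x))%:E)))%E).
  apply: ge0_le_integral => //.
  - by move=> x _; rewrite lee_fin (ip_ge0 Hip).
  - exact: ip_self_emeasurable.
  - apply: emeasurable_funM; first exact: measurable_cst.
    by apply: emeasurable_funD; apply: ip_self_emeasurable; [case: hu|case: hv].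
  - by move=> x _; rewrite -EFinD -EFinM lee_fin (ip_selfB_le Hip).
apply: integrable_lty => //; apply: integrableZl => //.
exact: integrableD (integrable_ip_self hu) (integrable_ip_self hv).
Qed.
Lemma L2norm2_eq0 u : vmeasurable u -> L2norm2 mu ip u = 0%E ->
  {ae mu, forall x, u x = 0}.
Proof.
move=> hu u0.
have /(ae_eq_integral_abs mu measurableT (ip_self_emeasurable hu)) :
    (\int[mu]_x `|(ip (u x) (u x))%:E| = 0)%E.
  rewrite -u0; apply: eq_integral => x _.
  by rewrite gee0_abs // lee_fin (ip_ge0 Hip).
by apply: (@filterS _ _ (ae_filter_ringOfSetsType mu)) => x /(_ I) [/(ip_eq0 Hip)].
Qed.
End square_integrable.

Lemma integral_cst_probability d (T : measurableType d) (R : realType)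
    (P : probability T R) (c : \bar R) :
  (\int[P]_x c = c)%E.
Proof. by rewrite -[c in RHS]mule1 -(probability_setT P) -integral_cst. Qed.

Section vector_mean.
Context d (T : measurableType d) (R : realType) (k : nat).
Variables (ip : 'rV[R]_k -> 'rV[R]_k -> R) (P : probability T R).
Hypothesis Hip : is_inner_product ip.
Local Open Scope ereal_scope.

Definition vmean (phi : T -> 'rV[R]_k) : 'rV[R]_k :=
  \row_(i < k) Rintegral P setT (fun t => phi t ord0 i).

(* [orbit_avg lam act f x] is [vmean lam (fun g => f (act g x))] by definition. *)

Lemma integrable_coord (phi : T -> 'rV[R]_k) i : inL2 P ip phi ->
  P.-integrable setT (fun t => (phi t ord0 i)%:E).
Proof.
move=> hphi; have [w hw] := ip_coord_repr Hip i.
have iC := finite_measure_integrable_cst P (ip w w) measurableT.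
apply: (le_integrable measurableT _ _
  (integrableD measurableT (integrable_ip_self Hip hphi) iC)).
  by apply/measurable_EFinP; case: hphi.
move=> t _ /=; rewrite !lee_fin -hw [X in (_ <= X)%R]ger0_norm.
  exact: (normr_ip_le Hip).
by rewrite addr_ge0 // (ip_ge0 Hip).
Qed.

Lemma integral_coord_vmean (phi : T -> 'rV[R]_k) i : inL2 P ip phi ->
  \int[P]_t (phi t ord0 i)%:E = (vmean phi ord0 i)%:E.
Proof.
move=> hphi; rewrite mxE /Rintegral fineK //.
by apply: integrable_fin_num => //; exact: integrable_coord.
Qed.

Lemma integral_ip_vmean (phi : T -> 'rV[R]_k) w : inL2 P ip phi ->
  \int[P]_t (ip (phi t) w)%:E = (ip (vmean phi) w)%:E.
Proof.
move=> hphi; under eq_integral => t _ do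
  rewrite (ip_row_expand Hip) -sumEFin (eq_bigr _ (fun i _ => EFinM _ _)).
rewrite integral_sum // => [|i]; last first.
  by apply: integrableZr => //; exact: integrable_coord.
rewrite (ip_row_expand Hip) -sumEFin; apply: eq_bigr => i _.
by rewrite integralZr ?integral_coord_vmean ?EFinM //; exact: integrable_coord.
Qed.

(* Jensen's inequality, obtained by integrating
   [0 <= ip (phi t - v) (phi t - v)] at [v = vmean phi]. *)
Lemma ip_self_vmean_le (phi : T -> 'rV[R]_k) : inL2 P ip phi ->
  (ip (vmean phi) (vmean phi))%:E <= \int[P]_t (ip (phi t) (phi t))%:E.
Proof.
move=> hphi; set v := vmean phi.
have cst_L2 : inL2 P ip (fun _ => v).
  split; first by move=> i; exact: measurable_cst.
  by rewrite /L2norm2 integral_cst_probability ltry.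
have iQ := integrable_ip_self Hip hphi.
have iZ := integrableZl measurableT (-2) (integrable_ip Hip hphi cst_L2).
have iC := finite_measure_integrable_cst P (ip v v) measurableT.
have : 0 <= \int[P]_t (ip (phi t - v) (phi t - v))%:E.
  by apply: integral_ge0 => t _; rewrite lee_fin (ip_ge0 Hip).
rewrite (eq_integral (fun t => ((ip (phi t) (phi t))%:E
    + ((-2)%:E * (ip (phi t) v)%:E)) + (ip v v)%:E)); last first.
  by move=> t _; rewrite (ip_selfB Hip) -EFinM -!EFinD; congr EFin; ring.
have iS := integrableD measurableT iQ iZ.
rewrite (integralD measurableT iS iC) /= (integralD measurableT iQ iZ).
rewrite (integralZl measurableT (integrable_ip Hip hphi cst_L2)).
rewrite integral_cst_probability integral_ip_vmean //.
rewrite -(fineK (integrable_fin_num measurableT iQ)) -!EFinM -!EFinD !lee_fin.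
lra.
Qed.
End vector_mean.

Section change_of_variables.
Context d1 d2 (T1 : measurableType d1) (T2 : measurableType d2) (R : realType).
Local Open Scope ereal_scope.

Lemma eq_integral_comp d3 (U : measurableType d3)
    (m1 : {measure set T1 -> \bar R}) (m2 : {measure set T2 -> \bar R})
    (phi1 : T1 -> U) (phi2 : T2 -> U) :
  (forall F : U -> \bar R, measurable_fun setT F -> (forall u, 0 <= F u) ->
     \int[m1]_x F (phi1 x) = \int[m2]_y F (phi2 y)) ->
  forall F : U -> \bar R, measurable_fun setT F ->
    \int[m1]_x F (phi1 x) = \int[m2]_y F (phi2 y).
Proof.
move=> ge0_eq F mF; rewrite integralE [RHS]integralE.
rewrite (funepos_comp F phi1) (funeneg_comp F phi1).
rewrite (funepos_comp F phi2) (funeneg_comp F phi2) /=.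
rewrite ge0_eq //; last exact: measurable_funepos.
by rewrite ge0_eq //; exact: measurable_funeneg.
Qed.

Lemma integral_measure_preserving (m1 : {measure set T1 -> \bar R})
    (m2 : {measure set T2 -> \bar R}) (phi : T1 -> T2) :
  measurable_fun setT phi ->
  (forall A, measurable A -> m1 (phi @^-1` A) = m2 A) ->
  forall F : T2 -> \bar R, measurable_fun setT F ->
    \int[m1]_x F (phi x) = \int[m2]_y F y.
Proof.
move=> mphi phi_pres; apply: (eq_integral_comp (phi2 := id)) => F mF F0.
rewrite -[LHS]/(\int[m1]_(x in phi @^-1` setT) (F \o phi) x).
rewrite -ge0_integral_pushforward //.
by apply: eq_measure_integral => A mA _; exact: phi_pres.
Qed.
End change_of_variables.

Section haar.
Variables (R : realType) (G : ptopologicalType).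
Variables (mul : G -> G -> G) (inv : G -> G) (one : G).
Hypothesis HG : is_topological_group mul inv one.
Variable lam : probability (borel G) R.
Hypothesis Hlam : is_haar_probability mul lam.

Let Hgrp : is_group mul inv one. Proof. by case: HG. Qed.

Lemma measurable_invg : measurable_fun setT (inv : borel G -> borel G).
Proof. by apply: continuous_borel_measurable; case: HG. Qed.

Lemma measurable_mull c : measurable_fun setT (mul c : borel G -> borel G).
Proof.
by apply: continuous_borel_measurable; apply: continuous_mull; case: HG.
Qed.

Local Open Scope ereal_scope.

Lemma haar_integralMl c (psi : borel G -> \bar R) : measurable_fun setT psi ->
  \int[lam]_g psi (mul c g) = \int[lam]_g psi g.
Proof.
move=> mpsi.
apply: (integral_measure_preserving (measurable_mull c)) => // A mA.
transitivity (lam [set mul (inv c) h | h in A]); last exact: Hlam.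
congr (lam _).
apply/seteqP; split => [g Acg|_ [h Ah <-]] /=.
  by exists (mul c g); rewrite ?(grp_mulKg Hgrp).
by rewrite (grp_mulKVg Hgrp).
Qed.

Section orbit.
Variables (X : ptopologicalType) (act : G -> X -> X).
Hypothesis Hact : is_action mul one act.
Hypothesis Hactm :
  measurable_fun setT
    (fun p : (borel G * borel X)%type => (act p.1 p.2 : borel X)).

Let actM g h x : act (mul g h) x = act g (act h x). Proof. by case: Hact. Qed.

Lemma measurable_orbit_map (y : X) :
  measurable_fun setT (fun g : borel G => (act g y : borel X)).
Proof.
apply: (measurableT_comp Hactm (g := fun g : borel G => (g, y : borel X))).
exact: measurable_fun_pair.
Qed.

Lemma measurable_act (g : G) :
  measurable_fun setT (fun x : borel X => (act g x : borel X)).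
Proof.
apply: (measurableT_comp Hactm (g := fun x : borel X => (g : borel G, x))).
exact: measurable_fun_pair.
Qed.

(* Integrate [F (act (inv a) (act b y))] over [lam \x lam] in both orders; each
   inner integral is removed by left invariance. *)
Lemma orbit_integral_invg (y : X) (F : borel X -> \bar R) :
  measurable_fun setT F ->
  \int[lam]_g F (act (inv g) y) = \int[lam]_g F (act g y).
Proof.
move: F; apply: eq_integral_comp => F mF F0.
have mFy : measurable_fun setT (fun g : borel G => F (act g y)).
  exact: measurableT_comp mF (measurable_orbit_map y).
have mFyV : measurable_fun setT (fun g : borel G => F (act (inv g) y)).
  exact: measurableT_comp mFy measurable_invg.
have mPhi : measurable_fun setT
    (fun p : (borel G * borel G)%type => F (act (inv p.1) (act p.2 y))).
  apply: (measurableT_comp mF); apply: (measurableT_comp Hactm (g :=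
    fun p : (borel G * borel G)%type => (inv p.1 : borel G, act p.2 y : borel X))).
  apply: measurable_fun_pair; first exact: measurableT_comp measurable_invg _.
  exact: measurableT_comp (measurable_orbit_map y) _.
have := fubini_tonelli (m1 := lam) (m2 := lam) _ mPhi (fun=> F0 _) => /=.
rewrite (eq_integral (fun _ => \int[lam]_b F (act b y))); last first.
  move=> a _; rewrite -(haar_integralMl (inv a) mFy).
  by apply: eq_integral => b _; rewrite actM.
rewrite [in RHS](eq_integral (fun _ => \int[lam]_a F (act (inv a) y))).
  by rewrite !integral_cst_probability => ->.
move=> b _; rewrite -(haar_integralMl (inv b) mFyV).
by apply: eq_integral => a _; rewrite (grp_invMg Hgrp) (grp_invgK Hgrp) actM.
Qed.

Lemma orbit_integral_act (y : X) (h : G) (F : borel X -> \bar R) :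
  measurable_fun setT F ->
  \int[lam]_g F (act g (act h y)) = \int[lam]_g F (act g y).
Proof.
move=> mF; rewrite -(orbit_integral_invg _ mF) -(orbit_integral_invg _ mF).
have mFyV : measurable_fun setT (fun g : borel G => F (act (inv g) y)).
  exact: measurableT_comp (measurableT_comp mF (measurable_orbit_map y))
    measurable_invg.
rewrite -(haar_integralMl (inv h) mFyV).
by apply: eq_integral => g _; rewrite (grp_invMg Hgrp) (grp_invgK Hgrp) actM.
Qed.

Section orbit_average.
Variables (k : nat) (f : borel X -> 'rV[R]_k).
Hypothesis mf : vmeasurable f.

Lemma orbit_avg_invariant : Defs.invariant act (orbit_avg lam act f).
Proof.
move=> h x; apply/rowP => i; rewrite !mxE /Rintegral; congr fine.
apply: (orbit_integral_act x h (F := fun z => (f z ord0 i)%:E)).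
by apply/measurable_EFinP; exact: mf.
Qed.

Lemma orbit_avg_measurable :
  vmeasurable (orbit_avg lam act f : borel X -> 'rV[R]_k).
Proof.
move=> i; pose h (p : (borel G * borel X)%type) := (f (act p.1 p.2) ord0 i)%:E.
have mh : measurable_fun setT h.
  by apply/measurable_EFinP; exact: measurableT_comp (mf i) Hactm.
have mhp := measurable_fun_fubini_tonelli_G (m1 := lam) _
  (measurable_funepos mh) (funepos_ge0 h).
have mhn := measurable_fun_fubini_tonelli_G (m1 := lam) _
  (measurable_funeneg mh) (funeneg_ge0 h).
rewrite (_ : (fun x => _) =
    fine \o (fun x => fubini_G lam h^\+ x - fubini_G lam h^\- x)).
  exact: measurableT_comp (fine_measurable measurableT)
    (emeasurable_funB mhp mhn).
apply/funext => x; rewrite /orbit_avg mxE /Rintegral /fubini_G /= integralE.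
by congr (fine (_ - _)); apply: eq_integral => g _; rewrite ?funeposE ?funenegE.
Qed.
End orbit_average.

Section invariant_measure.
Variable mu : probability (borel X) R.
Hypothesis Hmu : forall (g : G) (A : set (borel X)),
  measurable A -> mu (act g @^-1` A) = mu A.
Variables (k : nat) (ip : 'rV[R]_k -> 'rV[R]_k -> R).
Hypothesis Hip : is_inner_product ip.

Lemma integral_act (g : G) (F : borel X -> \bar R) : measurable_fun setT F ->
  \int[mu]_x F (act g x) = \int[mu]_x F x.
Proof.
by move=> mF; have := integral_measure_preserving (measurable_act g) (Hmu g) mF.
Qed.

Lemma L2norm2_orbit (u : borel X -> 'rV[R]_k) : vmeasurable u ->
  L2norm2 (lam \x mu) ip (fun p : (borel G * borel X)%type => u (act p.1 p.2))
  = L2norm2 mu ip u.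
Proof.
move=> hu; have mQ := ip_self_emeasurable Hip hu.
rewrite /L2norm2 (fubini_tonelli1 _ (measurableT_comp mQ Hactm)) => [|p]; last first.
  by rewrite lee_fin (ip_ge0 Hip).
rewrite /fubini_F /= (eq_integral (fun _ => L2norm2 mu ip u)).
  exact: integral_cst_probability.
by move=> g _; exact: integral_act.
Qed.

Lemma inL2_orbit (u : borel X -> 'rV[R]_k) : inL2 mu ip u ->
  inL2 (lam \x mu) ip (fun p : (borel G * borel X)%type => u (act p.1 p.2)).
Proof.
move=> [hu fin]; split; last by rewrite L2norm2_orbit.
by move=> i; exact: measurableT_comp (hu i) Hactm.
Qed.

Section least_squares.
Variable f : borel X -> 'rV[R]_k.
Hypothesis Hf : inL2 mu ip f.
Let fbar : borel X -> 'rV[R]_k := orbit_avg lam act f.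

Lemma ae_orbit_inL2 : {ae mu, forall x, inL2 lam ip (fun g => f (act g x))}.
Proof.
have := ae_integrable2 (integrable_ip_self Hip (inL2_orbit Hf)).
apply: filterS => x /= ix; split; last exact: (integrable_lty measurableT ix).
by move=> i; exact: measurableT_comp (Hf.1 i) (measurable_orbit_map x).
Qed.

Lemma orbit_avg_inL2 : inL2 mu ip fbar.
Proof.
have mQ := measurableT_comp (ip_self_emeasurable Hip Hf.1) Hactm.
have Q_ge0 (p : (borel G * borel X)%type) :
    0 <= (ip (f (act p.1 p.2)) (f (act p.1 p.2)))%:E.
  by rewrite lee_fin (ip_ge0 Hip).
split; first exact: orbit_avg_measurable Hf.1.
apply: le_lt_trans (_ : _ <= \int[mu]_x \int[lam]_g
    (ip (f (act g x)) (f (act g x)))%:E) _; last first.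
  by have := (inL2_orbit Hf).2; rewrite /L2norm2 (fubini_tonelli2 _ mQ Q_ge0).
apply: ae_ge0_le_integral => //.
- by move=> x _; rewrite lee_fin (ip_ge0 Hip).
- exact: ip_self_emeasurable (orbit_avg_measurable Hf.1).
- by move=> x _; apply: integral_ge0 => g _; rewrite lee_fin (ip_ge0 Hip).
- exact: (measurable_fun_fubini_tonelli_G (m1 := lam) _ mQ Q_ge0).
have := ae_orbit_inL2; apply: (@filterS _ _ (ae_filter_ringOfSetsType mu)).
by move=> x hx _; exact: ip_self_vmean_le.
Qed.

Lemma integral_ip_orbit_avg (t : borel X -> 'rV[R]_k) :
  inL2 mu ip t -> Defs.invariant act t ->
  \int[mu]_x (ip (f x) (t x))%:E = \int[mu]_x (ip (fbar x) (t x))%:E.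
Proof.
move=> ht t_inv.
have iPhi := integrable_ip Hip (inL2_orbit Hf) (inL2_orbit ht).
have := Fubini iPhi; rewrite /=.
rewrite (eq_integral (fun _ => \int[mu]_x (ip (f x) (t x))%:E)) => [|g _].
  rewrite integral_cst_probability => ->; apply: ae_eq_integral => //.
  - exact: measurable_fubini_G iPhi.
  - apply/measurable_EFinP; apply: (ip_measurable Hip); last by case: ht.
    exact: orbit_avg_measurable Hf.1.
  have := ae_orbit_inL2; apply: (@filterS _ _ (ae_filter_ringOfSetsType mu)).
  move=> x hx _; under eq_integral do rewrite t_inv.
  exact: integral_ip_vmean.
apply: (integral_act g (F := fun x => (ip (f x) (t x))%:E)).
by apply/measurable_EFinP; apply: (ip_measurable Hip); [case: Hf|case: ht].
Qed.

Lemma orbit_avg_pythagoras (s : borel X -> 'rV[R]_k) :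
  inS (act : G -> borel X -> borel X) mu ip s ->
  L2norm2 mu ip (fun x => f x - s x)%R =
    L2norm2 mu ip (fun x => f x - fbar x)%R
  + L2norm2 mu ip (fun x => fbar x - s x)%R.
Proof.
move=> [hs s_inv].
pose a x := (f x - fbar x)%R; pose b x := (fbar x - s x)%R.
have ha : inL2 mu ip a := inL2B Hip Hf orbit_avg_inL2.
have hb : inL2 mu ip b := inL2B Hip orbit_avg_inL2 hs.
have b_inv : Defs.invariant act b.
  by move=> g x; rewrite /b s_inv /fbar (orbit_avg_invariant Hf.1).
have ab_orth : \int[mu]_x (ip (a x) (b x))%:E = 0.
  have iFb := integrable_ip Hip Hf hb.
  have iFbarb := integrable_ip Hip orbit_avg_inL2 hb.
  rewrite (eq_integral (fun x => (ip (f x) (b x))%:E - (ip (fbar x) (b x))%:E)).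
    rewrite (integralB measurableT iFb iFbarb) integral_ip_orbit_avg // subee //.
    exact: (integrable_fin_num measurableT iFbarb).
  by move=> x _; rewrite /a (ipBl Hip) EFinB.
have iA := integrable_ip_self Hip ha; have iB := integrable_ip_self Hip hb.
have iAB := integrableZl measurableT 2 (integrable_ip Hip ha hb).
rewrite /L2norm2 (eq_integral (fun x => ((ip (a x) (a x))%:E
    + (2%:E * (ip (a x) (b x))%:E)) + (ip (b x) (b x))%:E)); last first.
  by move=> x _; rewrite -EFinM -!EFinD -(ip_selfD Hip) /a /b addrA subrK.
rewrite (integralD measurableT (integrableD measurableT iA iAB) iB) /=.
rewrite (integralD measurableT iA iAB).
by rewrite (integralZl measurableT (integrable_ip Hip ha hb)) ab_orth mule0 adde0.
Qed.

Lemma orbit_avg_le_L2norm2 (s : borel X -> 'rV[R]_k) :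
  inS (act : G -> borel X -> borel X) mu ip s ->
  L2norm2 mu ip (fun x => f x - fbar x)%R
  <= L2norm2 mu ip (fun x => f x - s x)%R.
Proof. by move=> hs; rewrite (orbit_avg_pythagoras hs) leeDl // L2norm2_ge0. Qed.

Lemma orbit_avg_unique_minimizer (h : borel X -> 'rV[R]_k) : inL2 mu ip h ->
  class_inS (act : G -> borel X -> borel X) mu ip h ->
  (forall s, inS (act : G -> borel X -> borel X) mu ip s ->
     L2norm2 mu ip (fun x => f x - h x)%R
     <= L2norm2 mu ip (fun x => f x - s x)%R) ->
  {ae mu, forall x, h x = fbar x}.
Proof.
move=> hh [s hs h_s] h_min.
have ms : vmeasurable s by case: hs => -[].
have fbar_S : inS (act : G -> borel X -> borel X) mu ip fbar.
  by split; [exact: orbit_avg_inL2 | exact: orbit_avg_invariant Hf.1].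
have f_h_s : L2norm2 mu ip (fun x => f x - h x)%R
    = L2norm2 mu ip (fun x => f x - s x)%R.
  apply: ae_eq_integral => //.
  - exact: (ip_self_emeasurable Hip (vmeasurableB Hf.1 hh.1)).
  - exact: (ip_self_emeasurable Hip (vmeasurableB Hf.1 ms)).
  by move: h_s; apply: (@filterS _ _ (ae_filter_ringOfSetsType mu)) => x -> _.
have fin : L2norm2 mu ip (fun x => f x - fbar x)%R \is a fin_num.
  exact: (integrable_fin_num measurableT
    (integrable_ip_self Hip (inL2B Hip Hf orbit_avg_inL2))).
have := h_min _ fbar_S; rewrite f_h_s (orbit_avg_pythagoras hs).
rewrite -[X in _ <= X]adde0 leeD2lE // => dist_le0.
have dist0 : L2norm2 mu ip (fun x => fbar x - s x)%R = 0.
  by apply/eqP; rewrite eq_le dist_le0 L2norm2_ge0.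
have := L2norm2_eq0 Hip (vmeasurableB (orbit_avg_measurable Hf.1) ms) dist0.
apply: (@filterS2 _ _ (ae_filter_ringOfSetsType mu) _ _ _ _ h_s) => x -> /eqP.
by rewrite subr_eq0 => /eqP <-.
Qed.
End least_squares.
End invariant_measure.
End orbit.
End haar.

Unset Implicit Arguments.

Theorem proposition3p9
  (R : realType) (k : nat)
  (G : ptopologicalType) (mul : G -> G -> G) (inv : G -> G) (one : G)
  (HG : is_topological_group mul inv one)
  (HGc : compact [set: G]) (HGh : hausdorff_space G) (HGs : @second_countable G)
  (lam : probability (borel G) R) (Hlam : is_haar_probability mul lam)
  (X : ptopologicalType) (HX : is_polish R X)
  (act : G -> X -> X) (Hact : is_action mul one act)
  (Hactm : measurable_fun setT (fun p : (borel G * borel X)%type => (act p.1 p.2 : borel X)))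
  (mu : probability (borel X) R)
  (Hmu : forall (g : G) (A : set (borel X)), measurable A -> mu (act g @^-1` A) = mu A)
  (ip : 'rV[R]_k -> 'rV[R]_k -> R) (Hip : is_inner_product ip)
  (f : borel X -> 'rV[R]_k) (Hf : inL2 mu ip f) :
  let fbar := orbit_avg lam act f in
  [/\ inL2 mu ip fbar,
      class_inS (act : G -> borel X -> borel X) mu ip fbar,
      (forall s, inS (act : G -> borel X -> borel X) mu ip s ->
         (L2norm2 mu ip (fun x => (f x - fbar x)%R) <= L2norm2 mu ip (fun x => (f x - s x)%R))%E) &
      (forall h, inL2 mu ip h -> class_inS (act : G -> borel X -> borel X) mu ip h ->
         (forall s, inS (act : G -> borel X -> borel X) mu ip s ->
            (L2norm2 mu ip (fun x => (f x - h x)%R) <= L2norm2 mu ip (fun x => (f x - s x)%R))%E) ->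
         {ae mu, forall x, h x = fbar x})].
Proof.
move=> fbar; have fbar_L2 := orbit_avg_inL2 lam Hactm Hmu Hip Hf.
split => //.
- exists fbar; last exact: aeW.
  by split => //; exact: (orbit_avg_invariant HG Hlam Hact Hactm Hf.1).
- exact: (orbit_avg_le_L2norm2 HG Hlam Hact Hactm Hmu Hip Hf).
- exact: (orbit_avg_unique_minimizer HG Hlam Hact Hactm Hmu Hip Hf).
Qed.
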